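(* Let $\mathbb{H}$ be the real quaternion algebra with standard basis $\{1,i,j,k\}$, and let $p\in\mathbb{R}[x]$ be any nonconstant real polynomial. Then $$\{p(ab)-p(ba)\mid a,b\in\mathbb{H}\}=\{bi+cj+dk\mid b,c,d\in\mathbb{R}\}.$$
   Context: $\mathbb{H}$ has multiplication determined by $i^2=j^2=k^2=ijk=-1$. *)

From HB Require Import structures.
From mathcomp Require Import all_boot all_order all_algebra.
From mathcomp Require Import reals.
Set Implicit Arguments. Unset Strict Implicit. Unset Printing Implicit Defensive.
Import Order.TTheory GRing.Theory Num.Theory.
Local Open Scope ring_scope.

(* Real quaternions a + b i + c j + d k, with i^2=j^2=k^2=ijk=-1. *)
Record quat (R : realType) := Quat { qre : R; qi : R; qj : R; qk : R }.

Section Quat.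
Variable R : realType.

Definition qadd (x y : quat R) : quat R :=
  Quat (qre x + qre y) (qi x + qi y) (qj x + qj y) (qk x + qk y).
Definition qopp (x : quat R) : quat R :=
  Quat (- qre x) (- qi x) (- qj x) (- qk x).
Definition qsub (x y : quat R) : quat R := qadd x (qopp y).

Definition qmul (x y : quat R) : quat R :=
  Quat (qre x * qre y - qi x * qi y - qj x * qj y - qk x * qk y)
       (qre x * qi y + qi x * qre y + qj x * qk y - qk x * qj y)
       (qre x * qj y - qi x * qk y + qj x * qre y + qk x * qi y)
       (qre x * qk y + qi x * qj y - qj x * qi y + qk x * qre y).

Definition qconst (c : R) : quat R := Quat c 0 0 0.

Definition qeval (p : {poly R}) (q : quat R) : quat R :=
  foldr (fun c acc => qadd (qmul acc q) (qconst c)) (qconst 0) (polyseq p).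

End Quat.

From HB Require Import structures.
From mathcomp Require Import all_boot all_order all_algebra.
From mathcomp Require Import reals.
From mathcomp Require Import complex polyrcf ring lra.
Import Order.TTheory GRing.Theory Num.Theory.
Local Open Scope ring_scope.
Local Open Scope complex_scope.

(** For a unit pure quaternion u, z |-> Re z + Im z u embeds C into H as a
   ring, and the embedding commutes with evaluation of real polynomials.  The
   products ab and ba have the same real part and the same imaginary norm, so
   they are the images of one complex number z under the embeddings for some
   u and v; hence p(ab) - p(ba) = Im p(z) (u - v) is pure.

   Conversely, if u + v != 0 then the embedding for v is the conjugate of the
   one for u by the pure quaternion a = u + v, and a pair x, a^-1 x a is always
   of the form bc, cb (take b = a, c = a^-1 x).  Take w with w^n = i, n = deg p: then
   s |-> Im p(s w) is a nonconstant real polynomial, so it has a value m with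
   m^2 > |y|^2, and it remains to write y/m as a difference of two unit vectors
   with nonzero sum. *)

Local Notation Re := (@complex.Re _).
Local Notation Im := (@complex.Im _).
Local Notation sq3 x1 x2 x3 := (x1 ^+ 2 + x2 ^+ 2 + x3 ^+ 2).

Section Quaternions.
Variable R : realType.
Implicit Types (a b x y : quat R) (z : R[i]) (p : {poly R}).

Lemma qmulA a b c : qmul a (qmul b c) = qmul (qmul a b) c.
Proof.
case: a b c => ? ? ? ? [? ? ? ?] [? ? ? ?].
by rewrite /qmul /=; congr Quat; ring.
Qed.

Lemma qmul1r a : qmul (qconst 1) a = a.
Proof. by case: a => ? ? ? ?; rewrite /qmul /qconst /=; congr Quat; ring. Qed.

Lemma qpure_invertible (b c d : R) : 0 < sq3 b c d ->
  exists a', qmul (Quat 0 b c d) a' = qconst 1 /\ qmul a' (Quat 0 b c d) = qconst 1.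
Proof.
move=> /gt_eqF/negbT sq_neq0.
exists (Quat 0 (- b / sq3 b c d) (- c / sq3 b c d) (- d / sq3 b c d)).
by split; rewrite /qmul /qconst /=; congr Quat; field.
Qed.

Lemma qmul_swap_of_conj x y a a' :
  qmul a a' = qconst 1 -> qmul a' a = qconst 1 -> qmul x a = qmul a y ->
  exists b c, qmul b c = x /\ qmul c b = y.
Proof.
move=> aa' a'a xa_ay; exists a, (qmul a' x); split.
  by rewrite qmulA aa' qmul1r.
by rewrite -qmulA xa_ay qmulA a'a qmul1r.
Qed.

Lemma qre_qmulC a b : qre (qmul a b) = qre (qmul b a).
Proof. by case: a b => ? ? ? ? [? ? ? ?]; rewrite /qmul /=; ring. Qed.

Lemma qim_norm_qmulC a b :
  sq3 (qi (qmul a b)) (qj (qmul a b)) (qk (qmul a b))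
  = sq3 (qi (qmul b a)) (qj (qmul b a)) (qk (qmul b a)).
Proof. by case: a b => ? ? ? ? [? ? ? ?]; rewrite /qmul /=; ring. Qed.

Definition qcomplex (u1 u2 u3 : R) z : quat R :=
  Quat (Re z) (Im z * u1) (Im z * u2) (Im z * u3).

Lemma qcomplexM {u1 u2 u3 : R} z1 z2 : sq3 u1 u2 u3 = 1 ->
  qmul (qcomplex u1 u2 u3 z1) (qcomplex u1 u2 u3 z2) = qcomplex u1 u2 u3 (z1 * z2).
Proof.
move=> u_unit; case: z1 z2 => a b [c d]; rewrite /qcomplex /qmul /=.
congr Quat; try ring.
by transitivity (a * c - b * d * sq3 u1 u2 u3); [ring | rewrite u_unit; ring].
Qed.

Lemma qsub_qcomplex u1 u2 u3 v1 v2 v3 z :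
  qsub (qcomplex u1 u2 u3 z) (qcomplex v1 v2 v3 z)
  = Quat 0 (Im z * (u1 - v1)) (Im z * (u2 - v2)) (Im z * (u3 - v3)).
Proof. by rewrite /qsub /qadd /qopp /qcomplex /=; congr Quat; ring. Qed.

Local Notation cpoly p := (map_poly (real_complex R) p).

Lemma polyseq_cpoly p : polyseq (cpoly p) = map (real_complex R) p.
Proof.
rewrite map_polyE (@PolyK _ 1) //.
by rewrite -(rmorph1 (real_complex R)) last_map fmorph_eq0; have := valP p.
Qed.

Lemma qeval_qcomplex {u1 u2 u3 : R} p z : sq3 u1 u2 u3 = 1 ->
  qeval p (qcomplex u1 u2 u3 z) = qcomplex u1 u2 u3 (cpoly p).[z].
Proof.
move=> u_unit; rewrite /qeval /horner polyseq_cpoly.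
elim: (polyseq p) => [|c s IH] /=; first by rewrite /qcomplex /qconst /= !mul0r.
rewrite IH qcomplexM //; case: (_ * z) => ? ?.
by rewrite /qcomplex /qadd /qconst /=; congr Quat; ring.
Qed.

Lemma qcomplex_decomp x : exists u1 u2 u3, sq3 u1 u2 u3 = 1 /\
  x = qcomplex u1 u2 u3 (Complex (qre x) (Num.sqrt (sq3 (qi x) (qj x) (qk x)))).
Proof.
case: x => r b c d /=; set t := Num.sqrt _.
have [t0|t_neq0] := eqVneq t 0.
  have /eqP := t0; rewrite sqrtr_eq0 => sq_le0.
  have [-> -> ->] : [/\ b = 0, c = 0 & d = 0] by split; nra.
  exists 1, 0, 0; split; first by rewrite expr1n expr0n /= !addr0.
  by rewrite /qcomplex t0 /=; congr Quat; ring.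
exists (b / t), (c / t), (d / t); split.
  rewrite !expr_div_n sqr_sqrtr ?addr_ge0 ?sqr_ge0 // -!mulrDl divff //.
  by apply: contra t_neq0 => /eqP sq0; rewrite /t sq0 sqrtr0.
by rewrite /qcomplex /=; congr Quat; rewrite mulrC divfK.
Qed.

Lemma qmul_swap_qcomplex a b : exists u1 u2 u3 v1 v2 v3 z,
  [/\ sq3 u1 u2 u3 = 1, sq3 v1 v2 v3 = 1,
      qmul a b = qcomplex u1 u2 u3 z & qmul b a = qcomplex v1 v2 v3 z].
Proof.
have [u1 [u2 [u3 [u_unit ->]]]] := qcomplex_decomp (qmul a b).
have [v1 [v2 [v3 [v_unit ->]]]] := qcomplex_decomp (qmul b a).
by exists u1, u2, u3, v1, v2, v3; eexists; rewrite qre_qmulC qim_norm_qmulC.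
Qed.

Lemma qcomplex_conj {u1 u2 u3 v1 v2 v3 : R} z :
  sq3 u1 u2 u3 = 1 -> sq3 v1 v2 v3 = 1 ->
  qmul (qcomplex u1 u2 u3 z) (Quat 0 (u1 + v1) (u2 + v2) (u3 + v3))
  = qmul (Quat 0 (u1 + v1) (u2 + v2) (u3 + v3)) (qcomplex v1 v2 v3 z).
Proof.
move=> u_unit v_unit; case: z => r t; rewrite /qcomplex /qmul /=.
congr Quat; try ring.
by transitivity (- t * (u1 * v1 + u2 * v2 + u3 * v3) - t * sq3 u1 u2 u3);
  [ring | rewrite u_unit -v_unit; ring].
Qed.

Lemma qmul_swap_of_qcomplex {u1 u2 u3 v1 v2 v3 : R} z :
  sq3 u1 u2 u3 = 1 -> sq3 v1 v2 v3 = 1 -> 0 < sq3 (u1 + v1) (u2 + v2) (u3 + v3) ->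
  exists a b, qmul a b = qcomplex u1 u2 u3 z /\ qmul b a = qcomplex v1 v2 v3 z.
Proof.
move=> u_unit v_unit /qpure_invertible [a' [aa' a'a]].
exact: qmul_swap_of_conj aa' a'a (qcomplex_conj z u_unit v_unit).
Qed.

Lemma exists_orthogonal (y1 y2 y3 : R) : exists w1 w2 w3,
  0 < sq3 w1 w2 w3 /\ w1 * y1 + w2 * y2 + w3 * y3 = 0.
Proof.
have [y0|y_neq0] := eqVneq (y2, y3) (0, 0).
  case: y0 => -> ->; exists 0, 1, 0.
  by split; [rewrite expr0n expr1n /= add0r addr0 ltr01 | ring].
exists 0, (- y3), y2; split; last by ring.
rewrite lt_def sqrrN expr0n /= add0r addr_ge0 ?sqr_ge0 // andbT.
by apply: contra y_neq0 => /eqP sq0; apply/eqP; congr pair; nra.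
Qed.

Lemma unit_vectors_of_difference {y1 y2 y3 : R} : sq3 y1 y2 y3 < 4%:R ->
  exists u1 u2 u3 v1 v2 v3,
  [/\ sq3 u1 u2 u3 = 1, sq3 v1 v2 v3 = 1,
      0 < sq3 (u1 + v1) (u2 + v2) (u3 + v3) &
      [/\ u1 - v1 = y1, u2 - v2 = y2 & u3 - v3 = y3]].
Proof.
move=> y_lt2.
have [w1 [w2 [w3 [w_gt0 wy0]]]] := exists_orthogonal y1 y2 y3.
pose k := Num.sqrt ((1 - sq3 y1 y2 y3 / 4%:R) / sq3 w1 w2 w3).
have k_gt0 : 0 < k by rewrite sqrtr_gt0 divr_gt0 //; lra.
have k2 : k ^+ 2 * sq3 w1 w2 w3 = 1 - sq3 y1 y2 y3 / 4%:R.
  by rewrite sqr_sqrtr ?divfK ?gt_eqF // divr_ge0 ?ltW //; lra.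
exists (k * w1 + y1 / 2%:R), (k * w2 + y2 / 2%:R), (k * w3 + y3 / 2%:R).
exists (k * w1 - y1 / 2%:R), (k * w2 - y2 / 2%:R), (k * w3 - y3 / 2%:R).
split; [| | | by split; field].
- by transitivity (k ^+ 2 * sq3 w1 w2 w3 + k * (w1 * y1 + w2 * y2 + w3 * y3)
    + sq3 y1 y2 y3 / 4%:R); [field | rewrite k2 wy0; field].
- by transitivity (k ^+ 2 * sq3 w1 w2 w3 - k * (w1 * y1 + w2 * y2 + w3 * y3)
    + sq3 y1 y2 y3 / 4%:R); [field | rewrite k2 wy0; field].
- by rewrite (_ : sq3 _ _ _ = 4%:R * (k ^+ 2 * sq3 w1 w2 w3)); [rewrite k2; lra | field].
Qed.

Lemma poly_sqr_unbounded (g : {poly R}) (M : R) : (1 < size g)%N ->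
  exists s, M <= g.[s] ^+ 2.
Proof.
move=> g_nc.
have lc_gt0 : 0 < lead_coef (g ^+ 2).
  rewrite lead_coef_exp exprn_even_gt0 //= lead_coef_eq0 -size_poly_eq0.
  by case: (size g) g_nc.
have size_gt1 : (1 < size (g ^+ 2))%N.
  have := size_exp g 2; move: g_nc.
  by case: (size g) => [|[|j]] // _; case: (size _) => [|[|k]].
have [s hs] := poly_lim_infty M lc_gt0 size_gt1.
by exists s; rewrite -horner_exp hs.
Qed.

Definition polyIm p (w : R[i]) : {poly R} :=
  \poly_(k < size p) (p`_k * Im (w ^+ k)).

Lemma horner_polyIm p w (s : R) : (polyIm p w).[s] = Im (cpoly p).[s%:C * w].
Proof.
rewrite horner_poly horner_coef size_map_poly.
rewrite raddf_sum; apply: eq_bigr => k _.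
rewrite coef_map exprMn -rmorphXn /=; case: (w ^+ k) => a b /=; ring.
Qed.

Lemma size_polyIm_root p : (1 < size p)%N ->
  size (polyIm p ((size p).-1.-root 'i)) = size p.
Proof.
move=> p_nc; rewrite size_poly_eq // rootCK; last by case: (size p) p_nc => [|[|n]].
by rewrite /= mulr1 -lead_coefE lead_coef_eq0 -size_poly_eq0; case: (size p) p_nc.
Qed.

Lemma qeval_qsub_swap_pure p a b : exists y1 y2 y3 : R,
  qsub (qeval p (qmul a b)) (qeval p (qmul b a)) = Quat 0 y1 y2 y3.
Proof.
have [u1 [u2 [u3 [v1 [v2 [v3 [z [u_unit v_unit -> ->]]]]]]]] := qmul_swap_qcomplex a b.
by rewrite !qeval_qcomplex // qsub_qcomplex; do 3 eexists.
Qed.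

Lemma qeval_qsub_swap_onto p (y1 y2 y3 : R) : (1 < size p)%N ->
  exists a b, qsub (qeval p (qmul a b)) (qeval p (qmul b a)) = Quat 0 y1 y2 y3.
Proof.
move=> p_nc; pose w : R[i] := (size p).-1.-root 'i.
have [s ge_m2] : exists s, sq3 y1 y2 y3 + 1 <= (polyIm p w).[s] ^+ 2.
  by apply: poly_sqr_unbounded; rewrite size_polyIm_root.
set m := (polyIm p w).[s] in ge_m2.
have y_ge0 : 0 <= sq3 y1 y2 y3 by rewrite !addr_ge0 ?sqr_ge0.
have m2_gt0 : 0 < m ^+ 2 by lra.
have ym_lt2 : sq3 (y1 / m) (y2 / m) (y3 / m) < 4%:R.
  by rewrite !expr_div_n -!mulrDl ltr_pdivrMr //; lra.
have [u1 [u2 [u3 [v1 [v2 [v3 [u_unit v_unit uv_gt0 [d1 d2 d3]]]]]]]] :=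
  unit_vectors_of_difference ym_lt2.
have [a [b [ab ba]]] := qmul_swap_of_qcomplex (s%:C * w) u_unit v_unit uv_gt0.
exists a, b; rewrite ab ba !qeval_qcomplex // qsub_qcomplex -horner_polyIm -/m.
rewrite d1 d2 d3.
have m_neq0 : m != 0 by apply: contraTneq m2_gt0 => ->; rewrite expr0n ltxx.
by congr Quat; rewrite mulrC divfK.
Qed.

End Quaternions.

Theorem theorem2p11 (R : realType) (p : {poly R}) (hp : (1 < size p)%N) :
  forall x : quat R,
    (exists a b : quat R, qsub (qeval p (qmul a b)) (qeval p (qmul b a)) = x)
    <-> (exists b c d : R, x = Quat 0 b c d).
Proof.
move=> x; split.
- by case=> a [b <-]; exact: qeval_qsub_swap_pure.
- by case=> y1 [y2 [y3 ->]]; exact: qeval_qsub_swap_onto.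
Qed.
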